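(* For every $n\ge 1$, $2w_n\in C(2q_n)$ and $2r_n\in C(2q_n)$, where $w_n=x_1\cdots x_n(x_1^2+1)$, $q_n=x_1^3x_2\cdots x_n$ and $r_n=x_1\cdots x_n$.
   Context: All operations are on $\mathbb{Z}_8$. For an operation $f$, $C(f)$ denotes the clone generated by $f$ together with binary addition and all unary constant operations. *)

From mathcomp Require Import all_boot all_algebra.
Unset Printing Implicit Defensive.
Import GRing.Theory.
Local Open Scope ring_scope.

Definition Z8 := 'Z_8.
Definition op (k : nat) := ('I_k -> Z8) -> Z8.

(* C(f): the clone generated by f, binary addition and all unary constants. *)
Inductive inC (m : nat) (f : op m) : forall k : nat, op k -> Prop :=
  | inC_proj : forall k (i : 'I_k), @inC m f k (fun x => x i)
  | inC_gen : @inC m f m f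
  | inC_add : @inC m f 2 (fun x => x ord0 + x (lift ord0 ord0))
  | inC_const : forall c : Z8, @inC m f 1 (fun _ => c)
  | inC_comp : forall l k (g : op l) (hs : 'I_l -> op k),
      @inC m f l g -> (forall i, @inC m f k (hs i)) ->
      @inC m f k (fun x => g (fun i => hs i x))
  | inC_ext : forall k (g h : op k), @inC m f k g -> (forall x, g x = h x) ->
      @inC m f k h.

Definition C (m : nat) (f : op m) : forall k, op k -> Prop := @inC m f.

(* r_n = x_1 ... x_n, w_n = x_1...x_n (x_1^2+1), q_n = x_1^3 x_2 ... x_n;
   here n.+1-ary, x_1 = x ord0. *)
Definition r_op (n : nat) : op n.+1 := fun x => \prod_(i < n.+1) x i.
Definition w_op (n : nat) : op n.+1 :=
  fun x => (\prod_(i < n.+1) x i) * (x ord0 ^+ 2 + 1).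
Definition q_op (n : nat) : op n.+1 :=
  fun x => x ord0 ^+ 3 * \prod_(i < n) x (lift ord0 i).

Definition times2 k (f : op k) : op k := fun x => 2 * f x.
Arguments C {m} f {k} g.
Arguments times2 {k} f x.

From mathcomp Require Import all_boot all_algebra.
From mathcomp Require Import ring.
Import GRing.Theory.
Local Open Scope ring_scope.

(* Substituting terms X, Y for x_1, x_2 in 2 q_{n+1} yields 2 X^3 Y x_3...x_{n+1}.
   Over Z_8 the binary functions 2ab and 2ab(a^2+1) are signed sums of such
   terms 2 X^3 Y with X, Y affine in a, b; multiplying through by x_3...x_{n+1}
   gives 2 r_{n+1} and 2 w_{n+1}. For n = 1, 2 w_1 = 2 q_1 + 2 x_1 directly. *)

Lemma Z8_oppE (y : Z8) : - y = y *+ 7.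
Proof.
apply/eqP; rewrite eq_sym -subr_eq0 opprK -mulrSr -mulr_natr (_ : 8 = 0) ?mulr0 //.
exact: val_inj.
Qed.

Section CloneClosure.

Context {m : nat} {f : op m}.

Lemma C_proj {k} (i : 'I_k) : C f (fun x : 'I_k -> Z8 => x i).
Proof. exact: inC_proj. Qed.

Lemma C_ext {k} {g h : op k} : C f g -> g =1 h -> C f h.
Proof. exact: inC_ext. Qed.

Lemma C_gen : C f f.
Proof. exact: inC_gen. Qed.

Lemma C_comp {l k} {g : op l} {hs : 'I_l -> op k} :
  C f g -> (forall i, C f (hs i)) -> C f (fun x => g (fun i => hs i x)).
Proof. exact: inC_comp. Qed.

Lemma C_add {k} {g h : op k} : C f g -> C f h -> C f (fun x => g x + h x).
Proof.
move=> Cg Ch; pose hs (i : 'I_2) := if i == ord0 then g else h.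
have Chs i : C f (hs i) by rewrite /hs; case: ifP.
by apply: C_ext (C_comp (inC_add m f) Chs) _ => x; rewrite /hs.
Qed.

Lemma C_cst {k} (c : Z8) : C f (fun _ : 'I_k.+1 -> Z8 => c).
Proof. exact: C_comp (inC_const m f c) (fun _ => C_proj ord0). Qed.

Lemma C_mulSn {k} {h : op k} j : C f h -> C f (fun x => h x *+ j.+1).
Proof.
move=> Ch; elim: j => [|j IHj]; first by apply: C_ext Ch _ => x; rewrite mulr1n.
by apply: C_ext (C_add Ch IHj) _ => x; rewrite [RHS]mulrS.
Qed.

Lemma C_opp {k} {h : op k} : C f h -> C f (fun x => - h x).
Proof. by move=> Ch; apply: C_ext (C_mulSn 6 Ch) _ => x; rewrite Z8_oppE. Qed.

Lemma C_sub {k} {g h : op k} : C f g -> C f h -> C f (fun x => g x - h x).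
Proof. by move=> Cg Ch; apply: C_add Cg (C_opp Ch). Qed.

End CloneClosure.

Definition subst12 {k} (y z : Z8) (x : 'I_k.+2 -> Z8) : 'I_k.+2 -> Z8 :=
  fun i => if i == ord0 then y else if i == lift ord0 ord0 then z else x i.

Lemma C_subst12 {m} {f : op m} {k} {g X Y : op k.+2} :
  C f g -> C f X -> C f Y -> C f (fun x => g (subst12 (X x) (Y x) x)).
Proof.
move=> Cg CX CY; apply: (C_comp (hs := fun i x => subst12 (X x) (Y x) x i) Cg) => i.
rewrite /subst12.
by case: (i == ord0); last case: (i == lift ord0 ord0); last apply: C_proj.
Qed.

Definition prod_drop2 {k} (x : 'I_k.+2 -> Z8) : Z8 :=
  \prod_(i < k) x (lift ord0 (lift ord0 i)).

Lemma prod_ord_recl2 k (x : 'I_k.+2 -> Z8) :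
  \prod_(i < k.+2) x i = x ord0 * (x (lift ord0 ord0) * prod_drop2 x).
Proof. by rewrite !big_ord_recl. Qed.

Lemma q_op_subst12 k (y z : Z8) (x : 'I_k.+2 -> Z8) :
  q_op k.+1 (subst12 y z x) = y ^+ 3 * (z * prod_drop2 x).
Proof. by rewrite /q_op big_ord_recl. Qed.

Lemma C_2q_subst12 {k} {X Y : op k.+2} :
  C (times2 (q_op k.+1)) X -> C (times2 (q_op k.+1)) Y ->
  C (times2 (q_op k.+1)) (fun x => 2 * (X x ^+ 3 * (Y x * prod_drop2 x))).
Proof.
move=> CX CY; apply: C_ext (C_subst12 C_gen CX CY) _ => x.
by rewrite /times2 q_op_subst12.
Qed.

Lemma Z8_2r_expansion (a b : Z8) :
  2 * (a * b) =
  2 * (b ^+ 3 * (a + 1)) + 2 * (a ^+ 3 * (a + b + 1)) - 2 * ((a + b) ^+ 3 * (a + 1)).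
Proof.
by case: a b => [[|[|[|[|[|[|[|[|//]]]]]]]] ?] [[|[|[|[|[|[|[|[|//]]]]]]]] ?];
  apply/val_inj.
Qed.

Lemma Z8_2w_expansion (a b : Z8) :
  2 * (a * b * (a ^+ 2 + 1)) =
  2 * (1 ^+ 3 * a) - 2 * ((b + 1) ^+ 3 * (a + b)) - 2 * ((a + b + 1) ^+ 3 * b).
Proof.
by case: a b => [[|[|[|[|[|[|[|[|//]]]]]]]] ?] [[|[|[|[|[|[|[|[|//]]]]]]]] ?];
  apply/val_inj.
Qed.

Lemma C_2w_2r_unary :
  C (times2 (q_op 0)) (times2 (w_op 0)) /\ C (times2 (q_op 0)) (times2 (r_op 0)).
Proof.
have Cx2 : C (times2 (q_op 0)) (fun x : 'I_1 -> Z8 => x ord0 + x ord0).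
  by apply: C_add; apply: C_proj.
split; [apply: C_ext (C_add C_gen Cx2) _ | apply: C_ext Cx2 _] => x;
  by rewrite /times2 /q_op /w_op /r_op !big_ord1 ?big_ord0; ring.
Qed.

Section AtLeastBinary.

Variable k : nat.

Local Notation Cq := (C (times2 (q_op k.+1))).

Let C_x1 : Cq (fun x : 'I_k.+2 -> Z8 => x ord0) := C_proj ord0.
Let C_x2 : Cq (fun x : 'I_k.+2 -> Z8 => x (lift ord0 ord0)) := C_proj _.
Let C_one : Cq (fun _ : 'I_k.+2 -> Z8 => 1) := C_cst 1.

Lemma C_2w_succ : Cq (times2 (w_op k.+1)).
Proof.
apply: C_ext (C_sub (C_sub (C_2q_subst12 C_one C_x1)
    (C_2q_subst12 (C_add C_x2 C_one) (C_add C_x1 C_x2)))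
    (C_2q_subst12 (C_add (C_add C_x1 C_x2) C_one) C_x2)) _ => x.
rewrite /times2 /w_op prod_ord_recl2.
move: (x ord0) (x (lift ord0 ord0)) (prod_drop2 x) => a b R.
symmetry; transitivity (2 * (a * b * (a ^+ 2 + 1)) * R); first ring.
by rewrite Z8_2w_expansion; ring.
Qed.

Lemma C_2r_succ : Cq (times2 (r_op k.+1)).
Proof.
apply: C_ext (C_sub (C_add (C_2q_subst12 C_x2 (C_add C_x1 C_one))
    (C_2q_subst12 C_x1 (C_add (C_add C_x1 C_x2) C_one)))
    (C_2q_subst12 (C_add C_x1 C_x2) (C_add C_x1 C_one))) _ => x.
rewrite /times2 /r_op prod_ord_recl2.
move: (x ord0) (x (lift ord0 ord0)) (prod_drop2 x) => a b R.
symmetry; transitivity (2 * (a * b) * R); first ring.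
by rewrite Z8_2r_expansion; ring.
Qed.

End AtLeastBinary.

Theorem lemma4p6 (n : nat) :
  C (times2 (q_op n)) (times2 (w_op n)) /\ C (times2 (q_op n)) (times2 (r_op n)).
Proof.
case: n => [|k]; first exact: C_2w_2r_unary.
by split; [apply: C_2w_succ | apply: C_2r_succ].
Qed.
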